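(* Let $p\ge3$ be a prime and $G_7=T\rtimes\langle x,y\rangle\le AGL(2,p)$ with $x=\|1,1;0,1\|$ and $y=\|-1,0;0,-1\|$. Let $H=\langle r_1,r_2\rangle\le G_7$ with $|r_1|=|r_2|=2$ and $H\cong D_{2p}$, and suppose $\mathrm{Core}_{G_7}(H)=1$. Then for every $r_0\in G_7$ with $|r_0|=2$ we have $\langle r_0,r_1,r_2\rangle\ne G_7$.
   Context: $D_{2p}$ is dihedral of order $2p$; $\mathrm{Core}_G(H)=\bigcap_{g\in G}g^{-1}Hg$. $\|a,b;c,d\|$ is the $2\times2$ matrix over $\mathbb{F}_p$ with rows $(a,b),(c,d)$; $T\cong\mathbb{Z}_p^2$ is the group of translations $t_a:v\mapsto v+a$ of $V=\mathbb{F}_p^2$ (row vectors, right $GL(2,p)$-action), $AGL(2,p)=T\rtimes GL(2,p)$ with $g^{-1}t_ag=t_{ag}$. *)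

From HB Require Import structures.
From mathcomp Require Import all_boot all_algebra all_fingroup all_solvable.
Set Implicit Arguments. Unset Strict Implicit. Unset Printing Implicit Defensive.
Import GRing.Theory.

(* AGL(2,p) is realised as a permutation group on
   V = F_p^2 (row vectors).  Permutation product in MathComp is
   (s * t) v = t (s v), i.e. a right action, matching the paper's
   right action of GL(2,p) on row vectors. *)

Section AGL.
Variable p : nat.
Local Notation V := 'rV['F_p]_2.

Definition translation_fun (a : V) (v : V) : V := (v + a)%R.
Lemma translation_inj a : injective (translation_fun a).
Proof. by move=> u v; rewrite /translation_fun => /addIr. Qed.
Definition transl (a : V) : {perm V} := perm (@translation_inj a).

Definition lin_fun (M : 'M['F_p]_2) (v : V) : V :=
  if M \in unitmx then (v *m M)%R else v.
Lemma lin_inj M : injective (lin_fun M).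
Proof.
move=> u v; rewrite /lin_fun; case: ifP => // uM.
by move=> /(congr1 (mulmx^~ (invmx M))); rewrite -!mulmxA mulmxV // !mulmx1.
Qed.
Definition linperm (M : 'M['F_p]_2) : {perm V} := perm (@lin_inj M).

(* x = ||1,1;0,1||,  y = ||-1,0;0,-1|| *)
Definition mx_x : 'M['F_p]_2 := \matrix_(i < 2, j < 2)
  (if (i == 1%N :> nat) && (j == 0%N :> nat) then 0 else 1)%R.
Definition mx_y : 'M['F_p]_2 := (- 1%:M)%R.

Definition Tgrp : {set {perm V}} := [set transl a | a : V].

Definition G7 : {set {perm V}} :=
  <<Tgrp :|: [set linperm mx_x; linperm mx_y]>>%g.
End AGL.

From mathcomp Require Import all_boot all_algebra all_fingroup all_solvable.
Set Implicit Arguments. Unset Strict Implicit. Unset Printing Implicit Defensive.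
Import GRing.Theory.

(* Every element of G_7 is an affine map v |-> c + v M whose linear part is
   M = +-||1,a;0,1||.  Squaring such a map gives linear part ||1,2a;0,1||, so
   for p odd an involution has a = 0 and lies in the subgroup T >| <y>, which
   does not contain x.  Hence no set of involutions generates G_7. *)

Section Unitriangular.
Local Open Scope ring_scope.
Variable R : comPzRingType.

Definition unitri (a : R) : 'M[R]_2 := 1%:M + a *: delta_mx 0 1.

Definition signed_unitri (s : bool) (a : R) : 'M[R]_2 := (-1) ^+ s *: unitri a.

Lemma unitri0 : unitri 0 = 1%:M.
Proof. by rewrite /unitri scale0r addr0. Qed.

Lemma signed_unitri_coef01 s (a : R) : signed_unitri s a 0 1 = (-1) ^+ s * a.
Proof. by rewrite !mxE /= mulr1 add0r. Qed.

Lemma mul_unitri (a b : R) : unitri a *m unitri b = unitri (a + b).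
Proof.
rewrite /unitri mulmxDl !mulmxDr !mul1mx mulmx1 -!scalemxAl -!scalemxAr.
by rewrite mul_delta_mx_0 // !scaler0 addr0 scalerDl addrAC addrA.
Qed.

Lemma mul_signed_unitri s t (a b : R) :
  signed_unitri s a *m signed_unitri t b = signed_unitri (s (+) t) (a + b).
Proof.
by rewrite /signed_unitri -scalemxAl -scalemxAr scalerA mul_unitri signr_addb.
Qed.

End Unitriangular.

Section AffineUnitriangular.
Local Open Scope ring_scope.
Variable F : finFieldType.
Local Notation V := 'rV[F]_2.

Lemma unitri_unit (a : F) : unitri a \in unitmx.
Proof.
by case: (@mulmx1_unit _ _ (unitri a) (unitri (- a))); rewrite ?mul_unitri ?subrr ?unitri0.
Qed.

Lemma signed_unitri_unit s (a : F) : signed_unitri s a \in unitmx.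
Proof. by rewrite unitmxZ ?unitri_unit // unitrX // unitrN1. Qed.

Definition affine_unitri (S : {set F}) : {set {perm V}} :=
  [set g : {perm V} | [exists s : bool, exists a in S,
     [forall v, g v == g 0 + v *m signed_unitri s a]]].

Lemma affine_unitriP (S : {set F}) (g : {perm V}) :
  reflect (exists s, exists2 a, a \in S & forall v, g v = g 0 + v *m signed_unitri s a)
          (g \in affine_unitri S).
Proof.
rewrite inE; apply: (iffP existsP) => [[s /existsP [a /andP [aS /forallP gE]]]|[s [a aS gE]]].
  by exists s, a => // v; apply/eqP.
by exists s; apply/existsP; exists a; rewrite aS; apply/forallP => v; apply/eqP.
Qed.

Lemma group_set_affine_unitri (S : {set F}) :
  0 \in S -> {in S &, forall a b, a + b \in S} -> group_set (affine_unitri S).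
Proof.
move=> S0 SD; apply/group_setP; split.
  apply/affine_unitriP; exists false, 0 => // v.
  by rewrite !perm1 /signed_unitri unitri0 scale1r mulmx1 add0r.
move=> g h /affine_unitriP [s [a aS gE]] /affine_unitriP [t [b bS hE]].
apply/affine_unitriP; exists (s (+) t), (a + b); first exact: SD.
move=> v; rewrite !permM gE (hE (g 0 + _)) (hE (g 0)) mulmxDl -mulmxA.
by rewrite mul_signed_unitri addrA.
Qed.

Lemma group_set_affine_unitri0 : group_set (affine_unitri [set 0]).
Proof.
by apply: group_set_affine_unitri => [|a b]; rewrite !inE // => /eqP -> /eqP ->; rewrite addr0.
Qed.

Lemma affine_unitri_involution (g : {perm V}) :
  2%:R != 0 :> F -> g \in affine_unitri setT -> (g ^+ 2 = 1)%g ->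
  g \in affine_unitri [set 0].
Proof.
move=> two_neq0 /affine_unitriP [s [a _ gE]] g2.
have ggE v : g (g v) = v by rewrite -permM -expg2 g2 perm1.
have cE : g 0 + g 0 *m signed_unitri s a = 0 by rewrite -gE ggE.
have sqE (v : V) : v *m signed_unitri false (a + a) = v.
  have := ggE v; rewrite gE (gE v) mulmxDl addrA cE add0r -mulmxA.
  by rewrite mul_signed_unitri addbb.
have a2 : a + a = 0.
  have := congr1 (fun w : V => w 0 1) (sqE 'e_0).
  by rewrite /= -rowE mxE signed_unitri_coef01 mul1r mxE.
apply/affine_unitriP; exists s, 0; first by rewrite inE.
move: a2; rewrite -mulr2n -mulr_natl => /eqP; rewrite mulf_eq0 (negbTE two_neq0) => /eqP <-.
exact: gE.
Qed.

End AffineUnitriangular.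

Section G7.
Local Open Scope ring_scope.
Variable p : nat.
Local Notation V := 'rV['F_p]_2.

Lemma mx_x_signed_unitri : mx_x p = signed_unitri false 1.
Proof.
apply/matrixP => i j; rewrite !mxE.
case: i => [[|[|i]]] //= ?; case: j => [[|[|j]]] //= ?.
all: by rewrite expr0 mul1r ?mulr0 ?mulr1 ?addr0 ?add0r.
Qed.

Lemma mx_y_signed_unitri : mx_y p = signed_unitri true 0.
Proof. by rewrite /mx_y /signed_unitri unitri0 scaleN1r. Qed.

Lemma linperm_signed_unitri s (a : 'F_p) (v : V) :
  linperm (signed_unitri s a) v = v *m signed_unitri s a.
Proof. by rewrite permE /lin_fun signed_unitri_unit. Qed.

Lemma G7_sub_affine_unitri : G7 p \subset affine_unitri setT.
Proof.
have affT := @group_set_affine_unitri 'F_p setT (in_setT 0) (fun a b _ _ => in_setT (a + b)).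
rewrite (gen_subG _ (Group affT)) subUset; apply/andP; split.
  apply/subsetP => _ /imsetP [a _ ->]; apply/affine_unitriP; exists false, 0 => // v.
  by rewrite !permE /translation_fun /signed_unitri unitri0 scale1r mulmx1 add0r addrC.
apply/subsetP => g /set2P [] ->; apply/affine_unitriP.
  by exists false, 1 => // v; rewrite mx_x_signed_unitri !linperm_signed_unitri mul0mx add0r.
by exists true, 0 => // v; rewrite mx_y_signed_unitri !linperm_signed_unitri mul0mx add0r.
Qed.

Lemma linperm_x_notin_affine_unitri0 : linperm (mx_x p) \notin affine_unitri [set 0].
Proof.
apply/affine_unitriP => -[s [a]]; rewrite inE => /eqP -> xE.
have := congr1 (fun w : V => w 0 1) (xE 'e_0).
rewrite mx_x_signed_unitri !linperm_signed_unitri mul0mx add0r /= -!rowE !mxE.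
by rewrite /= expr0 !mul1r mul0r !add0r mulr0 => /eqP; rewrite oner_eq0.
Qed.

Lemma Fp_two_neq0 : prime p -> (3 <= p)%N -> 2%:R != 0 :> 'F_p.
Proof.
move=> p_prime p_ge3; rewrite -(dvdn_pcharf (pchar_Fp p_prime)).
by apply/negP => /(dvdn_leq (isT : (0 < 2)%N)); rewrite leqNgt p_ge3.
Qed.

Lemma linperm_x_in_G7 : linperm (mx_x p) \in G7 p.
Proof. by apply: mem_gen; rewrite !inE eqxx orbT. Qed.

Lemma G7_involution_in_affine_unitri0 (r : {perm V}) :
  prime p -> (3 <= p)%N -> r \in G7 p -> #[r]%g = 2%N -> r \in affine_unitri [set 0].
Proof.
move=> p_prime p_ge3 rG r_ord.
apply: affine_unitri_involution (Fp_two_neq0 p_prime p_ge3) _ _.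
  exact: (subsetP G7_sub_affine_unitri).
by rewrite -[X in (r ^+ X)%g]r_ord expg_order.
Qed.

End G7.

Theorem mainTheorem14 (p : nat) (p_prime : prime p) (p_ge3 : 3 <= p)
  (r1 r2 : {perm 'rV['F_p]_2}) :
  r1 \in G7 p -> r2 \in G7 p ->
  #[r1]%g = 2 -> #[r2]%g = 2 ->
  (<<[set r1; r2]>> \isog 'D_(2 * p))%g ->
  gcore <<[set r1; r2]>>%g (G7 p) = 1%g ->
  forall r0 : {perm 'rV['F_p]_2},
    r0 \in G7 p -> #[r0]%g = 2 ->
    <<[set r0; r1; r2]>>%g != G7 p.
Proof.
move=> r1G r2G r1_ord r2_ord _ _ r0 r0G r0_ord.
have gen_sub : <<[set r0; r1; r2]>>%g \subset affine_unitri [set 0%R : 'F_p].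
  rewrite (gen_subG _ (Group (group_set_affine_unitri0 _))); apply/subsetP => r.
  by move=> /setUP [/setUP [] |] /set1P ->; apply: G7_involution_in_affine_unitri0.
apply: contraNneq (linperm_x_notin_affine_unitri0 p) => genE.
by rewrite (subsetP gen_sub) // genE linperm_x_in_G7.
Qed.
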